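(* Let $\mathrm{M}=\langle e_1+I,\ e_2+I,\ -I\rangle$, where $e_1,e_2$ are the standard basis vectors of $E^2$. The group $\mathrm{Aff}(\mathrm{M})$ has a normal dihedral subgroup $\mathrm{K}$ of order 4 generated by $(e_1/2+I)_\star$ and $(e_2/2+I)_\star$. The map $\eta:\mathrm{Aff}(\mathrm{M})\to\mathrm{PGL}(2,\mathbb Z)$ defined by $\eta((a+A)_\star)=\pm A$ for each $A\in\mathrm{GL}(2,\mathbb Z)$ is an epimorphism with kernel $\mathrm{K}$. The map $\sigma:\mathrm{PGL}(2,\mathbb Z)\to\mathrm{Aff}(\mathrm{M})$ defined by $\sigma(\pm A)=A_\star$ is a monomorphism, and $\sigma$ is a right inverse of $\eta$.
   Context: Affine maps of $E^2$ are written $a+A$ (meaning $x\mapsto a+Ax$); $a+I$ is translation by $a$. For a 2-space group $\mathrm{M}$, let $N_A(\mathrm{M})$ be its normalizer in the affine group of $E^2$. Each $a+A\in N_A(\mathrm{M})$ induces an affinity $(a+A)_\star:\mathrm{M}x\mapsto\mathrm{M}(a+Ax)$ of the flat orbifold $E^2/\mathrm{M}$; $\mathrm{Aff}(\mathrm{M})$ is the group of all such affinities (isomorphic to $N_A(\mathrm{M})/\mathrm{M}$). A dihedral group of order 4 means the Klein four-group. $\mathrm{PGL}(2,\mathbb Z)=\mathrm{GL}(2,\mathbb Z)/\{\pm I\}$, with the class of $A$ written $\pm A$. *)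

From HB Require Import structures.
From mathcomp Require Import all_boot all_order all_algebra.
From Stdlib Require Rdefinitions.
From mathcomp Require Import Rstruct.
Set Implicit Arguments. Unset Strict Implicit. Unset Printing Implicit Defensive.
Import Order.TTheory GRing.Theory Num.Theory.
Local Open Scope ring_scope.

Notation vec := 'cV[Rdefinitions.R]_2.
Notation mat := 'M[Rdefinitions.R]_2.

(* An affine map  a + A  :  x |-> a + A x  (A is required invertible
   separately, see [is_aff]). *)
Record affmap := Affmap { tr : vec ; lin : mat }.

Definition aff_apply (f : affmap) (x : vec) : vec := tr f + lin f *m x.
Definition is_aff (f : affmap) : Prop := lin f \in unitmx.

Definition aff_id : affmap := Affmap 0 1%:M.
Definition aff_comp (f g : affmap) : affmap :=
  Affmap (tr f + lin f *m tr g) (lin f *m lin g).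
Definition aff_inv (f : affmap) : affmap :=
  Affmap (- (invmx (lin f) *m tr f)) (invmx (lin f)).

Definition transl (a : vec) : affmap := Affmap a 1%:M.
Definition linmap (A : mat) : affmap := Affmap 0 A.

Definition e1 : vec := delta_mx 0 0.
Definition e2 : vec := delta_mx 1 0.

Inductive gen_by (S : affmap -> Prop) : affmap -> Prop :=
| gen_base f : S f -> gen_by S f
| gen_one : gen_by S aff_id
| gen_comp f g : gen_by S f -> gen_by S g -> gen_by S (aff_comp f g)
| gen_inv f : gen_by S f -> gen_by S (aff_inv f).

Definition Mgens (f : affmap) : Prop :=
  f = transl e1 \/ f = transl e2 \/ f = linmap (- 1%:M).
Definition inM : affmap -> Prop := gen_by Mgens.

Definition inN (f : affmap) : Prop :=
  is_aff f /\ forall g, inM g <-> inM (aff_comp (aff_comp f g) (aff_inv f)).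

Definition orbit (x : vec) (y : vec) : Prop :=
  exists2 g, inM g & y = aff_apply g x.

(* For f, g in N_A(M): the induced affinities f_* , g_* of E^2/M
   (f_* : Mx |-> M(f x)) are equal as maps of the orbifold. *)
Definition star_eq (f g : affmap) : Prop :=
  forall x y, orbit (aff_apply f x) y <-> orbit (aff_apply g x) y.

(* Since f |-> f_* is a homomorphism N_A(M) -> Aff(M), an affinity f_* lies
   in K iff it equals g_* for some g in the subgroup generated by the two
   half-translations. *)
Definition Kgens (f : affmap) : Prop :=
  f = transl (2^-1 *: e1) \/ f = transl (2^-1 *: e2).
Definition inK (f : affmap) : Prop :=
  inN f /\ exists2 g, gen_by Kgens g & star_eq f g.

Definition inGLZ (B : 'M[int]_2) : Prop := B \in unitmx.
Definition Zmat (B : 'M[int]_2) : mat := map_mx (fun z : int => z%:~R) B.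

(* The group M consists of the maps v + I and v - I with v integral.  Hence
   g x lies in the orbit M (f x) iff g x - f x or g x + f x is integral, and
   f_* = g_* says that for every x one of the two affine functions
   x |-> (g - f) x, x |-> (g + f) x is integral.  A line in E^2 on which both
   are non-constant cannot be covered by their integral level sets, so one of
   them is constant, i.e. f_* = g_* iff lin g = +-lin f with tr g -+ tr f
   integral.  Conjugating translations and -I shows that N_A(M) consists of
   the a + A with A in GL(2,Z) and 2a integral.  Then eta is well defined,
   A_* is a preimage of +-A, and the kernel is the set of (a + I)_* with 2a
   integral, i.e. the four half-lattice translations. *)

From Pilot Require Import Defs.
From HB Require Import structures.
From mathcomp Require Import all_boot all_order all_algebra.
From Stdlib Require Rdefinitions.
From mathcomp Require Import Rstruct.
From mathcomp Require Import ring lra.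
Import Order.TTheory GRing.Theory Num.Theory.
Local Open Scope ring_scope.

Local Notation integral := (mxOver Num.int).

Section IntegralMatrices.
Context {R : archiRealFieldType}.

Lemma integralD {m n : nat} (A B : 'M[R]_(m, n)) :
  A \is a integral -> B \is a integral -> A + B \is a integral.
Proof. by move=> /mxOverP iA /mxOverP iB; apply/mxOverP => i j; rewrite mxE rpredD. Qed.

Lemma integralN {m n : nat} (A : 'M[R]_(m, n)) :
  (- A \is a integral) = (A \is a integral).
Proof. by apply/mxOverP/mxOverP => iA i j; have := iA i j; rewrite mxE ?rpredN. Qed.

Lemma integralDl {m n : nat} (A B : 'M[R]_(m, n)) :
  A \is a integral -> (A + B \is a integral) = (B \is a integral).
Proof.
move=> iA; apply/idP/idP => [iAB|]; last exact: integralD.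
by rewrite -(addKr A B) integralD // integralN.
Qed.

Lemma integral0 {m n : nat} : (0 : 'M[R]_(m, n)) \is a integral.
Proof. by rewrite mxOver0. Qed.

Lemma integral_delta {m n : nat} i j : (delta_mx i j : 'M[R]_(m, n)) \is a integral.
Proof. by apply/mxOverP => k l; rewrite mxE rpred_nat. Qed.

Lemma integral_columns {m n : nat} (A : 'M[R]_(m, n)) :
  (forall j, A *m (delta_mx j 0 : 'cV_n) \is a integral) -> A \is a integral.
Proof.
move=> iA; apply/mxOverP => i j.
by have /mxOverP/(_ i 0) := iA j; rewrite -colE mxE.
Qed.

Lemma int_norm_lt1 (x : R) : x \is a Num.int -> `|x| < 1 -> x = 0.
Proof. by move=> ix; apply: contraTeq => nz; rewrite -leNgt norm_intr_ge1. Qed.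

Lemma int_lines_not_cover (p q a b : R) : a != 0 -> b != 0 ->
  ~ (forall t, p + t * a \is a Num.int \/ q + t * b \is a Num.int).
Proof.
(* Take t with p + t a = 1/2: then q + t b and q + (t + d) b are both
   integral for a small d != 0, yet they differ by d b, with 0 < |d b| < 1. *)
move=> a0 b0 cover.
pose d := (2 * (`|a| + `|b|))^-1.
have ab_gt0 : 0 < `|a| + `|b| by rewrite addr_gt0 ?normr_gt0.
have d_gt0 : 0 < d by rewrite invr_gt0 mulr_gt0.
have dab : d * `|a| + d * `|b| = 2^-1.
  by rewrite -mulrDr /d invfM -mulrA mulVf ?mulr1 // gt_eqF.
have da_gt0 : 0 < d * `|a| by rewrite mulr_gt0 ?normr_gt0.
have db_gt0 : 0 < d * `|b| by rewrite mulr_gt0 ?normr_gt0.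
have da : - 2^-1 < d * a < 2^-1 by rewrite -ltr_norml normrM gtr0_norm //; lra.
have db : `|d * b| < 1 by rewrite normrM gtr0_norm //; lra.
pose t := (2^-1 - p) / a.
have pt : p + t * a = 2^-1 by rewrite divfK // addrC subrK.
have not_int (x : R) : 0 < x -> x < 1 -> x \isn't a Num.int.
  move=> x_gt0 x_lt1; apply/negP => ix.
  by have := int_norm_lt1 x ix; rewrite gtr0_norm // => /(_ x_lt1) x0; lra.
have [|qt] := cover t; first by rewrite pt; apply/negP/not_int; lra.
have [|qtd] := cover (t + d).
  by rewrite mulrDl addrA pt; case/andP: da => da1 da2; apply/negP/not_int; lra.
have : d * b = 0.
  apply: int_norm_lt1 => //; have -> : d * b = q + (t + d) * b - (q + t * b) by ring.
  by rewrite rpredB.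
by apply/eqP; rewrite mulf_neq0 // gt_eqF.
Qed.

Lemma mx_neq0_entry {m n : nat} (A : 'M[R]_(m, n)) : A != 0 -> exists i j, A i j != 0.
Proof.
move=> nzA; suff /existsP [i /existsP [j nzAij]] : [exists i, exists j, A i j != 0].
  by exists i, j.
apply: contraR nzA => /existsPn nzA; apply/eqP/matrixP => i j.
by have /existsPn/(_ j)/negbNE/eqP := nzA i; rewrite mxE.
Qed.

Lemma exists_mulmx_neq0 {m n p : nat} (C : 'M[R]_(m, n)) (D : 'M[R]_(p, n)) :
  C != 0 -> D != 0 -> exists u : 'cV_n, (C *m u != 0) && (D *m u != 0).
Proof.
pose e (j : 'I_n) : 'cV[R]_n := delta_mx j 0.
have column_neq0 k (A : 'M[R]_(k, n)) : A != 0 -> exists j, A *m e j != 0.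
  case/mx_neq0_entry => i [j nzAij]; exists j; apply: contraNneq nzAij.
  by rewrite /e -colE => /matrixP/(_ i 0); rewrite !mxE => ->.
move=> /column_neq0 [j Cj] /column_neq0 [l Dl].
have [Dj|Dj] := eqVneq (D *m e j) 0; last by exists (e j); rewrite Cj Dj.
have [Cl|Cl] := eqVneq (C *m e l) 0; last by exists (e l); rewrite Cl Dl.
by exists (e j + e l); rewrite !mulmxDr Dj Cl addr0 add0r Cj Dl.
Qed.

Lemma integral_affine_cover_const {m n p : nat} (c : 'cV[R]_m) (d : 'cV[R]_p)
    (C : 'M_(m, n)) (D : 'M_(p, n)) :
  (forall x, (c + C *m x \is a integral) \/ (d + D *m x \is a integral)) ->
  C = 0 \/ D = 0.
Proof.
move=> cover; have [->|nzC] := eqVneq C 0; first by left.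
have [->|nzD] := eqVneq D 0; first by right.
have [u /andP[/mx_neq0_entry[i [j Cu]] /mx_neq0_entry[k [l Du]]]] :=
  exists_mulmx_neq0 _ _ nzC nzD.
exfalso; apply: (int_lines_not_cover (c i j) (d k l) _ _ Cu Du) => t.
case: (cover (t *: u)) => /mxOverP int_tu;
  [left; have := int_tu i j | right; have := int_tu k l];
  by rewrite -scalemxAr !mxE.
Qed.

Lemma integral_affine_everywhere {n p : nat} (d : 'cV[R]_p) (D : 'M_(p, n)) :
  (forall x, d + D *m x \is a integral) -> D = 0 /\ d \is a integral.
Proof.
move=> intD; have D0 : D = 0.
  by have [x|//|//] := @integral_affine_cover_const _ _ _ d d D D; left.
by split => //; have := intD 0; rewrite mulmx0 addr0.
Qed.

Lemma integral_affine_cover {m n p : nat} (c : 'cV[R]_m) (d : 'cV[R]_p)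
    (C : 'M_(m, n)) (D : 'M_(p, n)) :
  (forall x, (c + C *m x \is a integral) \/ (d + D *m x \is a integral)) ->
  (C = 0 /\ c \is a integral) \/ (D = 0 /\ d \is a integral).
Proof.
wlog C0 : m p c d C D / C = 0 => [wlog_C0 cover|cover].
  have [C0|D0] := integral_affine_cover_const _ _ _ _ cover.
    exact: wlog_C0.
  by apply/or_comm/wlog_C0 => // x; apply/or_comm.
have [ic|nic] := boolP (c \is a integral); [left | right] => //.
apply: integral_affine_everywhere => x.
by have [|//] := cover x; rewrite C0 mul0mx addr0 (negPf nic).
Qed.

End IntegralMatrices.

Local Notation aff_conj f g := (aff_comp (aff_comp f g) (aff_inv f)).

Lemma ord2_cases (i : 'I_2) : i = 0 \/ i = 1.
Proof. by case: i => -[|[|//]] ?; [left | right]; apply: val_inj. Qed.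

Lemma vec2E (v : vec) : v = v 0 0 *: e1 + v 1 0 *: e2.
Proof.
apply/matrixP => i j; rewrite ord1 !mxE.
by case: (ord2_cases i) => -> /=; rewrite ?mulr1 ?mulr0 ?addr0 ?add0r.
Qed.

Lemma integral_vec2 (v : vec) :
  (v \is a integral) = (v 0 0 \is a Num.int) && (v 1 0 \is a Num.int).
Proof.
apply/mxOverP/andP => [iv | [iv0 iv1] i j]; first by split; apply: iv.
by rewrite ord1; case: (ord2_cases i) => ->.
Qed.

Lemma integral_vecP (v : vec) :
  reflect (exists z1 z2 : int, v = e1 *~ z1 + e2 *~ z2) (v \is a integral).
Proof.
apply: (iffP idP) => [/mxOverP iv | [z1 [z2 ->]]].
  have [z1 E1] := intrP (iv 0 0); have [z2 E2] := intrP (iv 1 0).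
  by exists z1, z2; rewrite -!scaler_int -E1 -E2 -vec2E.
by apply: integralD; rewrite -scaler_int mxOverZ ?intr_int ?integral_delta.
Qed.

Lemma scalar_mxN1 : (- 1%:M : mat) = (-1)%:M.
Proof. by rewrite -scaleN1r scalemx1. Qed.

Lemma invmxN1 : invmx (- 1%:M : mat) = - 1%:M.
Proof. by rewrite scalar_mxN1 invmx_scalar invrN1. Qed.

Lemma unitmxN1 : (- 1%:M : mat) \in unitmx.
Proof. by rewrite scalar_mxN1 unitmxE det_scalar unitrX ?unitrN1. Qed.

Section GeneratedTranslations.
Variable S : affmap -> Prop.

Lemma gen_by_translD a b :
  gen_by S (transl a) -> gen_by S (transl b) -> gen_by S (transl (a + b)).
Proof. by move=> Sa Sb; have := gen_comp Sa Sb; rewrite /aff_comp /= !mul1mx. Qed.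

Lemma gen_by_translN a : gen_by S (transl a) -> gen_by S (transl (- a)).
Proof. by move=> Sa; have := gen_inv Sa; rewrite /aff_inv /= invmx1 mul1mx. Qed.

Lemma gen_by_translMz a (z : int) : gen_by S (transl a) -> gen_by S (transl (a *~ z)).
Proof.
have translMn n : gen_by S (transl a) -> gen_by S (transl (a *+ n)).
  move=> Sa; elim: n => [|n IHn]; first exact: gen_one.
  by rewrite mulrS; apply: gen_by_translD.
by case: z => n Sa; rewrite ?NegzE ?mulrNz; [|apply: gen_by_translN]; apply: translMn.
Qed.

Lemma gen_by_transl_lattice a1 a2 (z1 z2 : int) :
  S (transl a1) -> S (transl a2) -> gen_by S (transl (a1 *~ z1 + a2 *~ z2)).
Proof.
by move=> S1 S2; apply: gen_by_translD; apply: gen_by_translMz; apply: gen_base.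
Qed.

End GeneratedTranslations.

Lemma inM_linmapN1 : inM (linmap (- 1%:M)).
Proof. by apply: gen_base; right; right. Qed.

Lemma inM_iff g : inM g <-> tr g \is a integral /\ (lin g = 1%:M \/ lin g = - 1%:M).
Proof.
split.
  elim=> {g} [g [|[|]] ->|| f g _ [intf linf] _ [intg ling] | f _ [intf linf]] /=.
  1, 2: by split; [exact: integral_delta | left].
  - by split; [exact: integral0 | right].
  - by split; [exact: integral0 | left].
  - split; first by case: linf => ->; rewrite ?mulNmx mul1mx integralD ?integralN.
    by case: linf ling => -> [] ->; rewrite ?mulNmx ?mulmxN ?opprK mul1mx; tauto.
  - by case: linf => ->; rewrite ?invmxN1 ?invmx1 ?mulNmx mul1mx ?opprK ?integralN; tauto.
case: g => b B /= [/integral_vecP [z1 [z2 ->]] [->|->]].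
  by apply: gen_by_transl_lattice; rewrite /Mgens; tauto.
have -> : Affmap (e1 *~ z1 + e2 *~ z2) (- 1%:M) =
          aff_comp (transl (e1 *~ z1 + e2 *~ z2)) (linmap (- 1%:M)).
  by rewrite /aff_comp /= mulmx0 addr0 mul1mx.
apply: gen_comp; last exact: inM_linmapN1.
by apply: gen_by_transl_lattice; rewrite /Mgens; tauto.
Qed.

Lemma inM_transl b : b \is a integral -> inM (transl b).
Proof. by move=> ib; apply/inM_iff; split => //; left. Qed.

Lemma inM_unit g : inM g -> lin g \in unitmx.
Proof.
by case/inM_iff => _ [->|->]; [exact: unitmx1 | exact: unitmxN1].
Qed.

Lemma aff_apply_comp f g x : aff_apply (aff_comp f g) x = aff_apply f (aff_apply g x).
Proof. by rewrite /aff_apply /= mulmxDr mulmxA addrA. Qed.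

Lemma aff_apply_invK f x : lin f \in unitmx -> aff_apply (aff_inv f) (aff_apply f x) = x.
Proof. by move=> uf; rewrite /aff_apply /= mulmxDr mulmxA mulVmx // mul1mx addKr. Qed.

Lemma orbit_refl x : Defs.orbit x x.
Proof. by exists aff_id; [exact: gen_one | rewrite /aff_apply /= add0r mul1mx]. Qed.

Lemma orbit_sym x y : Defs.orbit x y -> Defs.orbit y x.
Proof.
case=> g Mg ->; exists (aff_inv g); first exact: gen_inv.
by rewrite aff_apply_invK ?inM_unit.
Qed.

Lemma orbit_trans x y z : Defs.orbit x y -> Defs.orbit y z -> Defs.orbit x z.
Proof.
case=> g Mg -> [h Mh ->]; exists (aff_comp h g); first exact: gen_comp.
by rewrite aff_apply_comp.
Qed.

Lemma orbit_iff x y : Defs.orbit x y <-> (y - x \is a integral) \/ (y + x \is a integral).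
Proof.
split=> [[[b B] /inM_iff /= [intb [->|->]] ->] | [int_yx|int_yx]].
- by left; rewrite /aff_apply /= mul1mx addrK.
- by right; rewrite /aff_apply /= mulNmx mul1mx subrK.
- exists (transl (y - x)); first by apply/inM_iff; split => //; left.
  by rewrite /aff_apply /= mul1mx subrK.
- exists (Affmap (y + x) (- 1%:M)); first by apply/inM_iff; split => //; right.
  by rewrite /aff_apply /= mulNmx mul1mx addrK.
Qed.

Lemma star_eq_orbit f g :
  star_eq f g <-> forall x, Defs.orbit (aff_apply f x) (aff_apply g x).
Proof.
split=> [fg x | fg x y]; first exact/fg/orbit_refl.
by split; apply: orbit_trans; [exact/orbit_sym | exact: fg].
Qed.

Lemma aff_applyB f g x :
  aff_apply g x - aff_apply f x = (tr g - tr f) + (lin g - lin f) *m x.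
Proof. by rewrite /aff_apply mulmxBl opprD addrACA. Qed.

Lemma aff_applyD f g x :
  aff_apply g x + aff_apply f x = (tr g + tr f) + (lin g + lin f) *m x.
Proof. by rewrite /aff_apply mulmxDl addrACA. Qed.

Lemma star_eqP f g : star_eq f g <->
  (lin g = lin f /\ tr g - tr f \is a integral) \/
  (lin g = - lin f /\ tr g + tr f \is a integral).
Proof.
rewrite star_eq_orbit; split=> [fg | fg x]; last first.
  apply/orbit_iff; rewrite aff_applyB aff_applyD.
  case: fg => -[-> int_fg]; [left; rewrite subrr | right; rewrite addNr];
  by rewrite mul0mx addr0.
have [x | [/eqP] | [/eqP]] := integral_affine_cover
  (tr g - tr f) (tr g + tr f) (lin g - lin f) (lin g + lin f).
- by rewrite -aff_applyB -aff_applyD; apply/orbit_iff.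
- by rewrite subr_eq0 => /eqP; left.
- by rewrite addr_eq0 => /eqP; right.
Qed.

Lemma star_eq_trans {f g h} : star_eq f g -> star_eq g h -> star_eq f h.
Proof. by move=> fg gh x y; rewrite fg gh. Qed.

Definition unimodular (A : mat) : bool :=
  [&& A \in unitmx, A \is a integral & invmx A \is a integral].

Lemma unimodular_mulmx_integral A (v : vec) :
  unimodular A -> (A *m v \is a integral) = (v \is a integral).
Proof.
case/and3P => uA iA iAi; apply/idP/idP => [iAv|]; last exact: mxOverM.
by rewrite -[v]mul1mx -(mulVmx uA) -mulmxA mxOverM.
Qed.

Lemma unimodular1 : unimodular 1%:M.
Proof. by rewrite /unimodular unitmx1 invmx1 mxOver_scalar ?int_num0 ?int_num1. Qed.

Lemma invmxM (A B : mat) :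
  A \in unitmx -> B \in unitmx -> invmx (A *m B) = invmx B *m invmx A.
Proof.
exact: invrM.
Qed.

Lemma unimodularM A B : unimodular A -> unimodular B -> unimodular (A *m B).
Proof.
case/and3P => uA iA iAi /and3P[uB iB iBi].
by rewrite /unimodular unitmx_mul uA uB invmxM ?mxOverM.
Qed.

Lemma unimodularV A : unimodular A -> unimodular (invmx A).
Proof. by case/and3P => uA iA iAi; rewrite /unimodular unitmx_inv invmxK uA iA iAi. Qed.

Lemma aff_conj_transl f b :
  lin f \in unitmx -> aff_conj f (transl b) = transl (lin f *m b).
Proof.
move=> uf; rewrite /aff_comp /aff_inv /transl /= mulmx1 mulmxV //.
by rewrite mulmxN mulmxA mulmxV // mul1mx addrAC subrr add0r.
Qed.

Lemma aff_conj_oppmx f b : lin f \in unitmx ->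
  aff_conj f (Affmap b (- 1%:M)) = Affmap (tr f *+ 2 + lin f *m b) (- 1%:M).
Proof.
move=> uf; rewrite /aff_comp /aff_inv /= !(mulmxN, mulNmx, mulmx1, opprK) mulmxV //.
by rewrite mulmxA mulmxV // mul1mx addrAC mulr2n.
Qed.

Lemma conjmx_pm1 (A B : mat) : A \in unitmx ->
  A *m B *m invmx A = 1%:M \/ A *m B *m invmx A = - 1%:M ->
  B = 1%:M \/ B = - 1%:M.
Proof.
move=> uA pm; have -> : B = invmx A *m (A *m B *m invmx A) *m A.
  by rewrite !mulmxA mulVmx // mul1mx -mulmxA mulVmx // mulmx1.
by case: pm => ->; [left | right]; rewrite ?mulmxN ?mulNmx mulmx1 mulVmx.
Qed.

Lemma inN_iff f : inN f <-> unimodular (lin f) /\ tr f *+ 2 \is a integral.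
Proof.
case: f => a A; split.
  case; rewrite /is_aff /= => uA normal.
  have int_conj g : inM g -> tr (aff_conj (Affmap a A) g) \is a integral.
    by move=> /normal /inM_iff[].
  split; last first.
    by have := int_conj _ inM_linmapN1; rewrite aff_conj_oppmx //= mulmx0 addr0.
  rewrite /unimodular uA /=; apply/andP; split; apply: integral_columns => j.
    by have := int_conj _ (inM_transl _ (integral_delta j 0)); rewrite aff_conj_transl.
  have /inM_iff[] // : inM (transl (invmx A *m delta_mx j 0)).
  apply/normal; rewrite aff_conj_transl //= mulmxA mulmxV // mul1mx.
  exact/inM_transl/integral_delta.
case=> /= unimodA int2a; split; first by case/and3P: unimodA.
have uA : A \in unitmx by case/and3P: unimodA.
suff conj_pm b (B : mat) : B = 1%:M \/ B = - 1%:M ->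
    (inM (Affmap b B) <-> inM (aff_conj (Affmap a A) (Affmap b B))).
  move=> -[b B]; split=> Mg.
    by case/inM_iff: (Mg) => _ pmB; apply/(conj_pm _ _ pmB).
  by case/inM_iff: (Mg) => _ /(conjmx_pm1 _ _ uA) pmB; apply/(conj_pm _ _ pmB).
case=> ->.
  rewrite -[Affmap b _]/(transl b) aff_conj_transl // !inM_iff /=.
  by rewrite unimodular_mulmx_integral.
rewrite aff_conj_oppmx // !inM_iff /=.
by rewrite integralDl // unimodular_mulmx_integral.
Qed.

Lemma inN_comp f g : inN f -> inN g -> inN (aff_comp f g).
Proof.
move=> /inN_iff[uf int2a] /inN_iff[ug int2b]; apply/inN_iff; split=> /=.
  exact: unimodularM.
by rewrite mulrnDl -raddfMn integralD // unimodular_mulmx_integral.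
Qed.

Lemma inN_inv f : inN f -> inN (aff_inv f).
Proof.
move=> /inN_iff[uf int2a]; apply/inN_iff; split=> /=; first exact: unimodularV.
by rewrite mulNrn integralN -raddfMn unimodular_mulmx_integral // unimodularV.
Qed.

Lemma ZmatM B1 B2 : Zmat (B1 *m B2) = Zmat B1 *m Zmat B2.
Proof. exact: map_mxM. Qed.

Lemma ZmatN B : Zmat (- B) = - Zmat B.
Proof. exact: map_mxN. Qed.

Lemma Zmat1 : Zmat 1%:M = 1%:M.
Proof. by rewrite /Zmat map_scalar_mx rmorph1. Qed.

Lemma Zmat_inj : injective Zmat.
Proof.
move=> B1 B2 /matrixP eqB; apply/matrixP => i j.
by have := eqB i j; rewrite !mxE => /intr_inj.
Qed.

Lemma Zmat_unimodular B : inGLZ B -> unimodular (Zmat B).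
Proof.
move=> uB; have ZBV : Zmat B *m Zmat (invmx B) = 1%:M.
  by rewrite -ZmatM mulmxV // Zmat1.
have uZB := (mulmx1_unit ZBV).1.
have intZ C : Zmat C \is a integral by apply/mxOverP => i j; rewrite mxE intr_int.
rewrite /unimodular uZB intZ -[invmx _]mulmx1 -ZBV mulmxA mulVmx //.
by rewrite mul1mx intZ.
Qed.

Lemma unimodular_Zmat A : unimodular A -> exists2 B, inGLZ B & A = Zmat B.
Proof.
case/and3P => uA /mxOverP iA /mxOverP iAi.
pose Zof (C : mat) := map_mx (@Num.floor _) C.
have ZofK (C : mat) : (forall i j, C i j \is a Num.int) -> Zmat (Zof C) = C.
  by move=> iC; apply/matrixP => i j; rewrite !mxE floorK.
exists (Zof A); last by rewrite ZofK.
suff /mulmx1_unit[] : Zof A *m Zof (invmx A) = 1%:M by [].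
by apply: Zmat_inj; rewrite ZmatM !ZofK // mulmxV // Zmat1.
Qed.

Lemma inN_linmap_Zmat B : inGLZ B -> inN (linmap (Zmat B)).
Proof. by move=> uB; apply/inN_iff; rewrite /= Zmat_unimodular // mul0rn integral0. Qed.

Lemma half_twice : (2^-1 : Rdefinitions.R) *+ 2 = 1.
Proof. by rewrite mulr2n; lra. Qed.

Lemma half_not_int : (2^-1 : Rdefinitions.R) \isn't a Num.int.
Proof.
apply/negP => half_int; have := int_norm_lt1 _ half_int.
by rewrite ger0_norm; lra.
Qed.

Lemma gen_Kgens_iff g :
  gen_by Kgens g <-> lin g = 1%:M /\ tr g *+ 2 \is a integral.
Proof.
split.
  elim=> {g} [g [|] ->|| f g _ [linf intf] _ [ling intg] | f _ [linf intf]] /=.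
  1, 2: by rewrite scalerMnl half_twice scale1r; split => //; exact: integral_delta.
  - by rewrite mul0rn; split => //; exact: integral0.
  - by rewrite linf ling !mul1mx mulrnDl; split => //; exact: integralD.
  - by rewrite linf invmx1 mul1mx mulNrn integralN.
case: g => b B /= [-> /integral_vecP[z1 [z2 int2b]]].
have -> : b = (2^-1 *: e1) *~ z1 + (2^-1 *: e2) *~ z2.
  rewrite !scalerMzr -scalerDr -int2b -scaler_nat scalerA mulVf ?scale1r //.
  by rewrite pnatr_eq0.
by apply: gen_by_transl_lattice; rewrite /Kgens; [left | right].
Qed.

Lemma inK_iff f : inN f -> ((lin f = 1%:M \/ lin f = - 1%:M) <-> inK f).
Proof.
move=> Nf; have /inN_iff[_ int2a] := Nf.
split=> [pm | [_ [g /gen_Kgens_iff[ling _] /star_eqP]]]; last first.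
  rewrite ling => -[[lf _] | [lf _]]; first by left; rewrite -lf.
  by right; rewrite -[lin f]opprK -lf.
(* a + I and a - I induce the same affinity, as 2a is integral. *)
split=> //; exists (transl (tr f)); first exact/gen_Kgens_iff.
apply/star_eqP; case: pm => linf; [left | right]; rewrite /= linf ?opprK.
  by rewrite subrr integral0.
by rewrite -mulr2n.
Qed.

Lemma inK_square f : inK f -> star_eq (aff_comp f f) aff_id.
Proof.
move=> Kf; have [Nf _] := Kf; have /inN_iff[_ int2a] := Nf.
apply/star_eqP; left; rewrite /=.
case: ((inK_iff _ Nf).2 Kf) => ->; rewrite ?mulNmx ?mulmxN ?opprK !mul1mx; split=> //.
  by rewrite sub0r integralN.
by rewrite subrr subr0 integral0.
Qed.

Lemma inK_conj f g : inN f -> inK g -> inK (aff_conj f g).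
Proof.
move=> Nf Kg; have [Ng _] := Kg.
have Nfg : inN (aff_conj f g) by apply: inN_comp; [exact: inN_comp | exact: inN_inv].
apply/(inK_iff _ Nfg); have /inN_iff[/and3P[uf _ _] _] := Nf.
case: ((inK_iff _ Ng).2 Kg) => /= ->; [left | right];
  by rewrite ?mulmxN ?mulNmx mulmx1 mulmxV.
Qed.

Definition half_transl (r s : bool) : affmap :=
  transl ((2^-1 *+ r) *: e1 + (2^-1 *+ s) *: e2).

Lemma inK_half_transl r s : inK (half_transl r s).
Proof.
have int2 : tr (half_transl r s) *+ 2 \is a integral.
  rewrite integral_vec2 !mulmxnE !mxE /= !mulr1 !mulr0 addr0 add0r.
  by rewrite -!mulrnA !(mulnC _ 2) !mulrnA half_twice !rpred_nat.
have Kh : gen_by Kgens (half_transl r s) by apply/gen_Kgens_iff.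
by split; [apply/inN_iff; split; [exact: unimodular1 |] | exists (half_transl r s)].
Qed.

Lemma half_diff_int (r r' : bool) :
  (2^-1 : Rdefinitions.R) *+ r' - 2^-1 *+ r \is a Num.int -> r = r'.
Proof. by case: r r' => -[] //=; rewrite ?subr0 ?sub0r ?rpredN (negPf half_not_int). Qed.

Lemma half_transl_inj r s r' s' :
  star_eq (half_transl r s) (half_transl r' s') -> r = r' /\ s = s'.
Proof.
case/star_eqP => -[/= lin_eq]; last first.
  by move/matrixP/(_ 0 0)/eqP: lin_eq; rewrite !mxE -addr_eq0 -mulr2n pnatr_eq0.
rewrite integral_vec2 !mxE /= !mulr1 !mulr0 !addr0 !add0r.
by case/andP => /half_diff_int -> /half_diff_int ->.
Qed.

Lemma half_parity (x : Rdefinitions.R) :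
  x *+ 2 \is a Num.int -> exists r : bool, x - 2^-1 *+ r \is a Num.int.
Proof.
case/intrP => z x2z.
have [r z_mod2] : exists r : bool, (z %% 2)%Z = r.
  have := @modz_ge0 z 2 isT; have := @ltz_mod z 2 isT.
  by case: (z %% 2)%Z => -[|[|n]] //; [exists false | exists true].
exists r; suff -> : x - 2^-1 *+ r = (z %/ 2)%Z%:~R by exact: intr_int.
have := congr1 (intr : int -> Rdefinitions.R) (divz_eq z 2).
rewrite z_mod2 intrD intrM -x2z.
by rewrite -[2^-1 *+ r]mulr_natr mulr2n -!pmulrn; lra.
Qed.

Lemma half_transl_cover f : inK f -> exists r s, star_eq f (half_transl r s).
Proof.
case=> _ [[b B] /gen_Kgens_iff[/= -> int2b] fg].
move: int2b; rewrite integral_vec2 !mulmxnE.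
case/andP => /half_parity[r int_r] /half_parity[s int_s].
exists r, s; apply: (star_eq_trans fg); apply/star_eqP; left; split=> //=.
rewrite integral_vec2 !mxE /= !mulr1 !mulr0 addr0 add0r.
by rewrite -!(opprB (b _ _)) !rpredN int_r.
Qed.

Theorem lemma21 :
  (* ---- K is a normal Klein four-subgroup of Aff(M) generated by
          (e1/2+I)_* and (e2/2+I)_* ---- *)
  (inN (transl (2^-1 *: e1)) /\ inN (transl (2^-1 *: e2))) /\
  (exists k0 k1 k2 k3 : affmap,
      [/\ inK k0, inK k1, inK k2 & inK k3] /\
      (~ star_eq k0 k1 /\ ~ star_eq k0 k2 /\ ~ star_eq k0 k3 /\
       ~ star_eq k1 k2 /\ ~ star_eq k1 k3 /\ ~ star_eq k2 k3) /\
      (forall f, inK f ->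
         star_eq f k0 \/ star_eq f k1 \/ star_eq f k2 \/ star_eq f k3)) /\
  (forall f, inK f -> star_eq (aff_comp f f) aff_id) /\
  (forall f g, inN f -> inK g -> inK (aff_comp (aff_comp f g) (aff_inv f))) /\
  (* ---- eta : (a+A)_* |-> +-A is a well-defined epimorphism
          Aff(M) -> PGL(2,Z) with kernel K ---- *)
  (forall f, inN f -> exists2 B, inGLZ B & lin f = Zmat B) /\
  (forall f g, inN f -> inN g -> star_eq f g ->
     lin f = lin g \/ lin f = - lin g) /\
  (forall f g, inN f -> inN g ->
     lin (aff_comp f g) = lin f *m lin g) /\
  (forall B, inGLZ B -> exists2 f, inN f &
     (lin f = Zmat B \/ lin f = - Zmat B)) /\
  (forall f, inN f -> ((lin f = 1%:M \/ lin f = - 1%:M) <-> inK f)) /\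
  (* ---- sigma : +-A |-> A_* is a well-defined monomorphism
          PGL(2,Z) -> Aff(M), right inverse of eta ---- *)
  (forall B, inGLZ B -> inN (linmap (Zmat B))) /\
  (forall B, inGLZ B -> star_eq (linmap (Zmat B)) (linmap (Zmat (- B)))) /\
  (forall B1 B2, inGLZ B1 -> inGLZ B2 ->
     star_eq (aff_comp (linmap (Zmat B1)) (linmap (Zmat B2)))
             (linmap (Zmat (B1 *m B2)))) /\
  (forall B1 B2, inGLZ B1 -> inGLZ B2 ->
     star_eq (linmap (Zmat B1)) (linmap (Zmat B2)) -> B1 = B2 \/ B1 = - B2) /\
  (forall B, inGLZ B -> lin (linmap (Zmat B)) = Zmat B).
Proof.
split.
  split; apply/inN_iff;
  by rewrite /= unimodular1 scalerMnl half_twice scale1r integral_delta.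
split.
  exists (half_transl false false), (half_transl true false),
         (half_transl false true), (half_transl true true).
  split; first by split; apply: inK_half_transl.
  split; first by do !split; move/half_transl_inj => -[].
  by move=> f /half_transl_cover[r [s]]; case: r; case: s; tauto.
split; first exact: inK_square.
split; first exact: inK_conj.
split; first by move=> f /inN_iff[/unimodular_Zmat].
split; first by move=> f g _ _ /star_eqP[[-> _] | [-> _]]; [left | right; rewrite opprK].
split; first by [].
split; first by move=> B uB; exists (linmap (Zmat B)); [exact: inN_linmap_Zmat | left].
split; first exact: inK_iff.
split; first exact: inN_linmap_Zmat.
split.
  by move=> B _; apply/star_eqP; right; rewrite /= ZmatN addr0 integral0.
split; first by move=> B1 B2 _ _; rewrite /aff_comp /= mulmx0 addr0 ZmatM.
split; last by [].
move=> B1 B2 _ _ /star_eqP[[/Zmat_inj -> _] | [/= E _]]; [left | right] => //.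
by apply: Zmat_inj; rewrite ZmatN E opprK.
Qed.
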